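(* Let $\mathcal{P}$ be a finite poset, $\mathcal{M}_k$ the set of $k$-monotone functions $\mathcal{P}\to\{0,1\}$, and $f\colon\mathcal{P}\to\{0,1\}$. Then $\mathrm{dist}(f,\mathcal{M}_k)=\varepsilon_f$ if and only if the minimum vertex cover of the violation hypergraph of $f$ has size $\varepsilon_f|\mathcal{P}|$.
   Context: $f$ is $k$-monotone if there is no chain $x_1\prec\cdots\prec x_{k+1}$ with $f(x_1)=1$ and $f(x_i)\neq f(x_{i+1})$ for all $i\in[k]$. $\mathrm{dist}(f,\mathcal{M}_k)$ is the minimum over $g\in\mathcal{M}_k$ of the fraction of points of $\mathcal{P}$ where $f\neq g$. The violation hypergraph of $f$ has vertex set $\mathcal{P}$ and a hyperedge $\{x_1,\dots,x_{k+1}\}$ for each chain $x_1\prec\cdots\prec x_{k+1}$ with $f(x_1)=1$ and $f(x_i)\neq f(x_{i+1})$ for all $i\in[k]$. A vertex cover is a set of vertices meeting every hyperedge. *)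

From HB Require Import structures.
From mathcomp Require Import all_boot all_order all_algebra.
Set Implicit Arguments. Unset Strict Implicit. Unset Printing Implicit Defensive.
Import Order.TTheory GRing.Theory Num.Theory.

(* A finite poset P is a type T : finPOrderType d.  Functions P -> {0,1} are
   T -> bool (true = 1). *)

Section KMono.
Context {d : Order.disp_t} {T : finPOrderType d}.

(* s = [:: x_1; ...; x_(k+1)] is a violating chain for f:
   x_1 < ... < x_(k+1) (strict order), f x_1 = 1, f x_i <> f x_(i+1). *)
Definition viol_chain (k : nat) (f : T -> bool) (s : seq T) : bool :=
  [&& size s == k.+1,
      sorted (fun x y => (x < y)%O) s,
      head false (map f s) &
      sorted (fun a b => a != b) (map f s)].

Definition k_monotone (k : nat) (f : T -> bool) : bool :=
  [forall s : (k.+1).-tuple T, ~~ viol_chain k f s].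

Definition Mk (k : nat) : {set {ffun T -> bool}} :=
  [set g : {ffun T -> bool} | k_monotone k g].

Definition hamming (f g : T -> bool) : nat := #|[set x | f x != g x]|.

Definition dist_Mk (k : nat) (f : T -> bool) : rat :=
  (\big[minn/#|T|]_(g in Mk k) hamming f g)%:R / #|T|%:R.

(* C is a vertex cover of the violation hypergraph of f: it meets every
   hyperedge {x_1,...,x_(k+1)} *)
Definition vertex_cover (k : nat) (f : T -> bool) (C : {set T}) : bool :=
  [forall s : (k.+1).-tuple T, viol_chain k f s ==> has (mem C) s].

(* size of a minimum vertex cover (setT is always a cover) *)
Definition min_vertex_cover (k : nat) (f : T -> bool) : nat :=
  \big[minn/#|T|]_(C : {set T} | vertex_cover k f C) #|C|.

End KMono.

From HB Require Import structures.
From mathcomp Require Import all_boot all_order all_algebra.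
Import Order.TTheory GRing.Theory Num.Theory.

Set Implicit Arguments. Unset Strict Implicit. Unset Printing Implicit Defensive.

(* Every g in M_k disagrees with f on a vertex cover of the violation
   hypergraph, since f = g off that set.  Conversely, given a vertex cover C,
   let r(x) be the length of the longest alternating chain (strictly
   increasing, starting at a 1, values of f alternating) that avoids C and
   lies below x.  Such chains have length at most k because C is a cover, r
   is monotone, and maximality of r forces r(x) to have the parity of f(x)
   whenever x is not in C.  Hence g = odd o r agrees with f off C; and it is
   k-monotone, because r increases strictly along a chain on which g
   alternates, so a violating chain for g would push r beyond k. *)

Lemma last_alternating (b0 : bool) (bs : seq bool) :
  path (fun a b => a != b) b0 bs -> last b0 bs = b0 (+) odd (size bs).
Proof.
elim: bs b0 => [|b bs IH] b0 /=; first by rewrite addbF.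
by case/andP=> /negPf b0b /IH ->; case: b0 b b0b => [] [] //=; rewrite ?negbK.
Qed.

Section AlternatingChains.
Context {d : Order.disp_t} {T : porderType d}.
Variable f : T -> bool.

Definition alt_chain (s : seq T) : bool :=
  [&& sorted <%O s, head false (map f s) & sorted (fun a b => a != b) (map f s)].

Lemma alt_chain_take n s : 0 < n -> alt_chain s -> alt_chain (take n s).
Proof.
move=> n_gt0 /and3P[lt_s f_head alt_s]; apply/and3P; split.
- by apply: take_sorted lt_s => y x z; apply: lt_trans.
- by case: s n_gt0 f_head {lt_s alt_s} => [|a s]; case: n.
- by move: alt_s; rewrite map_take -{1}(cat_take_drop n (map f s)) => /cat_sorted2[].
Qed.

Lemma alt_chain_rcons a s x : alt_chain (a :: s) ->
  (last a s < x)%O -> f (last a s) != f x -> alt_chain (rcons (a :: s) x).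
Proof.
case/and3P=> /= lt_s f_a alt_s lt_x f_x.
by rewrite /alt_chain /= rcons_path lt_s lt_x map_rcons rcons_path alt_s last_map f_a.
Qed.

Lemma f_last_alt_chain a s :
  alt_chain (a :: s) -> f (last a s) = odd (size (a :: s)).
Proof.
case/and3P=> _ /= f_a alt_s.
by rewrite -last_map last_alternating // f_a size_map; case: odd.
Qed.

End AlternatingChains.

Lemma viol_chainE {d} {T : finPOrderType d} k (f : T -> bool) s :
  viol_chain k f s = (size s == k.+1) && alt_chain f s.
Proof. by []. Qed.

Section CoverRepair.
Context {d : Order.disp_t} {T : finPOrderType d}.
Variables (k : nat) (f : T -> bool) (C : {set T}).
Hypothesis coverC : vertex_cover k f C.

Lemma alt_chain_avoiding_cover s : alt_chain f s -> ~~ has (mem C) s -> size s <= k.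
Proof.
move=> alt_s; apply: contraR; rewrite -ltnNge => k_lt_s.
have size_t : size (take k.+1 s) == k.+1 by rewrite size_takel.
have := implyP (forallP coverC (Tuple size_t)); rewrite viol_chainE size_t.
move=> /(_ (alt_chain_take (ltn0Sn k) alt_s)) /hasP[y /mem_take y_s y_C].
by apply/hasP; exists y.
Qed.

Definition chain_below (x : T) (s : seq T) : bool :=
  [&& alt_chain f s, ~~ has (mem C) s & all (<= x)%O s].

Definition alt_rank (x : T) : nat :=
  \max_(j < k.+1 | [exists t : j.-tuple T, chain_below x t]) j.

Lemma alt_rank_le x : alt_rank x <= k.
Proof. by apply/bigmax_leqP => j _; rewrite -ltnS. Qed.

Lemma alt_rank_ge x s : chain_below x s -> size s <= alt_rank x.
Proof.
move=> below_s; have /and3P[alt_s C_s _] := below_s.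
have s_lt : size s < k.+1 by rewrite ltnS alt_chain_avoiding_cover.
have size_t : size s == Ordinal s_lt by [].
by apply: (bigop.bigmax_sup (Ordinal s_lt)) => //; apply/existsP; exists (Tuple size_t).
Qed.

Lemma alt_rank_witness x :
  0 < alt_rank x -> exists2 s, chain_below x s & size s = alt_rank x.
Proof.
rewrite /alt_rank.
case: (pickP (fun j : 'I_k.+1 => [exists t : j.-tuple T, chain_below x t])).
  2: by move=> no_j; rewrite big_pred0.
move=> j0 Pj0 _; rewrite (bigop.bigmax_eq_arg j0) //.
by case: arg_maxnP => // j /existsP[t below_t] _; exists t; rewrite ?size_tuple.
Qed.

Lemma alt_rank_mono : {homo alt_rank : x y / (x <= y)%O >-> x <= y}.
Proof.
move=> x y le_xy; apply/bigmax_leqP => j /existsP[t /and3P[alt_t C_t below_t]].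
rewrite -(size_tuple t); apply: alt_rank_ge; rewrite /chain_below alt_t C_t.
by apply/allP => z /(allP below_t) /le_trans; apply.
Qed.

Lemma odd_alt_rank x : x \notin C -> odd (alt_rank x) = f x.
Proof.
move=> x_notC; have [rank0 | rank_gt0] := posnP (alt_rank x).
  rewrite rank0; apply/esym/negbTE/negP => f_x.
  suff : size [:: x] <= alt_rank x by rewrite rank0.
  by apply: alt_rank_ge; rewrite /chain_below /alt_chain /= f_x lexx orbF x_notC.
have [[|a s] below_s size_s] := alt_rank_witness rank_gt0; first by rewrite -size_s.
case/and3P: (below_s) => alt_s C_s le_s; rewrite -size_s -(f_last_alt_chain alt_s).
apply/eqP; apply: contraT => f_last.
have le_last : (last a s <= x)%O := allP le_s _ (mem_last a s).
have lt_last : (last a s < x)%O.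
  by rewrite lt_neqAle le_last andbT; apply: contraNneq f_last => ->.
suff : size (rcons (a :: s) x) <= alt_rank x by rewrite size_rcons size_s ltnn.
apply: alt_rank_ge; rewrite /chain_below alt_chain_rcons //.
by rewrite -cats1 has_cat all_cat negb_or C_s le_s /= lexx orbF x_notC.
Qed.

Definition cover_repair : {ffun T -> bool} := [ffun x => odd (alt_rank x)].

Lemma alt_rank_alternating_path x s :
  path <%O x s -> path (fun a b => a != b) (cover_repair x) (map cover_repair s) ->
  alt_rank x + size s <= alt_rank (last x s).
Proof.
elim: s x => [|y s IH] x /=; first by rewrite addn0.
case/andP=> lt_xy lt_s /andP[neq_xy alt_s]; apply: leq_trans (IH y lt_s alt_s).
rewrite addnS -addSn leq_add2r ltn_neqAle alt_rank_mono ?ltW // andbT.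
by apply: contra neq_xy; rewrite !ffunE => /eqP ->.
Qed.

Lemma cover_repair_Mk : cover_repair \in Mk k.
Proof.
rewrite inE; apply/forallP => t; rewrite viol_chainE.
apply/negP => /andP[/eqP]; case: (tval t) => [|a s] //= [size_s].
case/and3P=> /= lt_s g_a alt_s.
have rank_a : 0 < alt_rank a by move: g_a; rewrite ffunE; case: alt_rank.
have := leq_trans (leq_add rank_a (leqnn _)) (alt_rank_alternating_path lt_s alt_s).
by rewrite size_s add1n ltnNge alt_rank_le.
Qed.

Lemma hamming_cover_repair : hamming f cover_repair <= #|C|.
Proof.
apply/subset_leq_card/subsetP => x; rewrite inE ffunE.
by apply: contraR => /odd_alt_rank ->; rewrite eqxx.
Qed.

End CoverRepair.

Section MinimumDistance.
Context {d : Order.disp_t} {T : finPOrderType d}.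
Variables (k : nat) (f : T -> bool).

Lemma disagreement_vertex_cover g :
  g \in Mk k -> vertex_cover k f [set x | f x != g x].
Proof.
rewrite inE => /forallP g_mono; apply/forallP => t; apply/implyP => viol_t.
apply: contraR (g_mono t) => /hasPn agree.
suff agree_map : map g t = map f t by rewrite /viol_chain agree_map.
by apply/eq_in_map => x /agree; rewrite !inE negbK => /eqP.
Qed.

Lemma min_hamming_Mk :
  \big[minn/#|T|]_(g in Mk k) hamming f g = min_vertex_cover k f.
Proof.
apply/eqP; rewrite eqn_leq; apply/andP; split.
- apply: (le_bigmin (T:=nat)); first exact: (bigmin_le_id (T:=nat)).
  move=> C coverC; apply: leq_trans (hamming_cover_repair coverC).
  exact: (bigmin_le_cond (T:=nat) _ _ (cover_repair_Mk coverC)).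
- apply: (le_bigmin (T:=nat)); first exact: (bigmin_le_id (T:=nat)).
  move=> g /disagreement_vertex_cover cover_g.
  exact: (bigmin_le_cond (T:=nat) _ _ cover_g).
Qed.

End MinimumDistance.

Local Open Scope ring_scope.

Theorem lemmaB9 (d : Order.disp_t) (T : finPOrderType d) (k : nat)
    (f : T -> bool) (eps : rat) (hP : (0 < #|T|)%N) :
  dist_Mk k f = eps <-> (min_vertex_cover k f)%:R = eps * #|T|%:R.
Proof.
have card_neq0 : (#|T|%:R : rat) != 0 by rewrite pnatr_eq0 -lt0n.
rewrite /dist_Mk min_hamming_Mk; split=> [<- | ->].
- by rewrite divfK.
- by rewrite mulfK.
Qed.
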